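(* Let $F$ be a minimally unsatisfiable clause-set. 1. If $v$ is a singular variable for $F$ which occurs (positively or negatively) in every clause of $F$, then $\{v\}\in F$ or $\{\overline{v}\}\in F$. 2. If $\{x\}\in F$ for some literal $x$, then $v:=\mathrm{var}(x)$ is singular for $F$, with $\mathrm{ldeg}_F(x)=1$. If moreover $F$ is saturated, then $v$ occurs in every clause of $F$.
   Context: Literals are variables $v$ and complements $\overline{v}$; a clause is a finite set of literals with no complementary pair; a clause-set is a finite set of clauses; $\mathrm{var}(F)$ is the set of variables of $F$ and $\mathrm{var}(x)$ the variable underlying literal $x$; $\mathrm{ldeg}_F(x)$ is the number of clauses of $F$ containing literal $x$. A minimally unsatisfiable $F$ is saturated if for every $C \in F$ and every literal $y$ with $\mathrm{var}(y) \in \mathrm{var}(F)\setminus \mathrm{var}(C)$, the clause-set $(F\setminus\{C\})\cup\{C\cup\{y\}\}$ is satisfiable. A variable $v$ is singular for $F$ if $\min(\mathrm{ldeg}_F(v),\mathrm{ldeg}_F(\overline{v}))=1$. *)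

From mathcomp Require Import all_boot finmap.
Set Implicit Arguments. Unset Strict Implicit. Unset Printing Implicit Defensive.
Local Open Scope fset_scope.

Definition lit := (nat * bool)%type.
Definition pos (v : nat) : lit := (v, true).
Definition neg (v : nat) : lit := (v, false).
Definition lvar (x : lit) : nat := x.1.
Definition compl (x : lit) : lit := (x.1, ~~ x.2).

Definition clause := {fset lit}.
Definition clauseset := {fset clause}.

Definition is_clause (C : clause) : Prop := forall x, x \in C -> compl x \notin C.
Definition is_clauseset (F : clauseset) : Prop := forall C, C \in F -> is_clause C.

Definition varC (C : clause) : {fset nat} := [fset lvar x | x in C].
Definition varF (F : clauseset) : {fset nat} := \bigcup_(C <- F) varC C.

Definition ldeg (F : clauseset) (x : lit) : nat := #|` [fset C in F | x \in C] |.

Definition sat_lit (f : nat -> bool) (x : lit) : bool := f x.1 == x.2.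
Definition sat_clause (f : nat -> bool) (C : clause) : Prop :=
  exists2 x, x \in C & sat_lit f x.
Definition satisfiable (F : clauseset) : Prop :=
  exists f : nat -> bool, forall C, C \in F -> sat_clause f C.

Definition minimally_unsat (F : clauseset) : Prop :=
  ~ satisfiable F /\ forall C, C \in F -> satisfiable (F `\ C).

Definition saturated (F : clauseset) : Prop :=
  minimally_unsat F /\
  forall C y, C \in F -> lvar y \in varF F -> lvar y \notin varC C ->
    satisfiable ((F `\ C) `|` [fset C `|` [fset y]]).

Definition singular (F : clauseset) (v : nat) : Prop :=
  minn (ldeg F (pos v)) (ldeg F (neg v)) = 1.

From mathcomp Require Import all_boot finmap.
Set Implicit Arguments. Unset Strict Implicit. Unset Printing Implicit Defensive.
Local Open Scope fset_scope.

(* A unit clause {x} of a minimally unsatisfiable F forces x: any other clause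
   containing x would be redundant, so ldeg F x = 1, and without a clause
   containing the complement the assignment could be repaired at var x.  For
   the converse, if x occurs only in C0 and var x occurs everywhere, a second
   literal y of C0 gives a satisfying assignment (x false, y true).  Under
   saturation, a clause C avoiding var x could be extended by the complement
   of x without becoming satisfiable, since {x} already falsifies it. *)

Lemma lit_cases (x y : lit) : lvar y = lvar x -> y = x \/ y = compl x.
Proof.
by case: x y => [v b] [w c]; rewrite /lvar /compl /= => ->; case: b c => [] []; auto.
Qed.

Lemma lvar_compl (x : lit) : lvar (compl x) = lvar x.
Proof. by []. Qed.

Lemma mem_varC (C : clause) (x : lit) :
  (lvar x \in varC C) = (x \in C) || (compl x \in C).
Proof.
apply/imfsetP/orP => [[y /= Hy /esym /lit_cases [] <-]|[Hx|Hx]]; auto.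
- by exists x.
- by exists (compl x).
Qed.

Lemma sat_lit_compl (f : nat -> bool) (x : lit) :
  sat_lit f (compl x) = ~~ sat_lit f x.
Proof. by rewrite /sat_lit /compl /=; case: (f x.1); case: x.2. Qed.

Lemma sat_clause1 (f : nat -> bool) (x : lit) :
  sat_clause f [fset x] <-> sat_lit f x.
Proof.
split => [[y /fset1P -> //]|Hx]; by exists x; rewrite ?fset11.
Qed.

Definition set_lit (f : nat -> bool) (x : lit) : nat -> bool :=
  fun w => if w == lvar x then x.2 else f w.

Lemma sat_set_lit (f : nat -> bool) (x : lit) : sat_lit (set_lit f x) x.
Proof. by rewrite /sat_lit /set_lit eqxx. Qed.

Lemma sat_set_lit_other (f : nat -> bool) (x y : lit) :
  lvar y != lvar x -> sat_lit (set_lit f x) y = sat_lit f y.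
Proof. by rewrite /sat_lit /set_lit => /negbTE ->. Qed.

Lemma sat_fsetD1 (F : clauseset) (C : clause) (f : nat -> bool) :
  (forall D, D \in F `\ C -> sat_clause f D) -> sat_clause f C ->
  forall D, D \in F -> sat_clause f D.
Proof.
move=> HFC HC D HD; case: (eqVneq D C) => [-> //|HDC].
by apply: HFC; rewrite in_fsetD1 HDC.
Qed.

Section LiteralDegree.

Variables (F : clauseset) (x : lit).

Lemma ldeg_eq1 (C0 : clause) : C0 \in F -> x \in C0 ->
  (forall C, C \in F -> x \in C -> C = C0) -> ldeg F x = 1.
Proof.
move=> HC0 Hx Huniq; rewrite /ldeg (_ : [fset C in F | x \in C] = [fset C0]).
  by rewrite cardfs1.
apply/fsetP => C; rewrite !inE /=; apply/andP/eqP => [[]|->//]; exact: Huniq.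
Qed.

Lemma ldeg_eq1P : ldeg F x = 1 ->
  exists C0, [/\ C0 \in F, x \in C0 & forall C, C \in F -> x \in C -> C = C0].
Proof.
move=> /eqP/cardfs1P [C0 Hset].
have memS C : (C \in F) && (x \in C) = (C == C0).
  by rewrite -in_fset1 -Hset !inE.
have /andP [HC0 Hx] : (C0 \in F) && (x \in C0) by rewrite memS.
by exists C0; split=> // C HC HxC; apply/eqP; rewrite -memS HC.
Qed.

Lemma ldeg_eq0 : ldeg F x = 0 -> forall C, C \in F -> x \notin C.
Proof.
move=> /eqP; rewrite cardfs_eq0 => /eqP H0 C HC; apply/negP => HxC.
by have := in_fset0 C; rewrite -H0 !inE /= HC HxC.
Qed.

End LiteralDegree.

Lemma singular_ldeg (F : clauseset) (v : nat) :
  singular F v -> exists x, lvar x = v /\ ldeg F x = 1.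
Proof.
rewrite /singular; by case: leqP => _ H; [exists (pos v) | exists (neg v)].
Qed.

Lemma singular_lvar (F : clauseset) (x : lit) :
  ldeg F x = 1 -> 0 < ldeg F (compl x) -> singular F (lvar x).
Proof.
case: x => v [] Hx Hc; rewrite /compl /= in Hc;
  by rewrite /singular /pos /neg /= Hx ?[minn _ 1]minnC (minn_idPl Hc).
Qed.

Lemma unit_of_ldeg1 (F : clauseset) (x : lit) :
  is_clauseset F -> ~ satisfiable F -> ldeg F x = 1 ->
  (forall C, C \in F -> lvar x \in varC C) -> [fset x] \in F.
Proof.
move=> HF HU /ldeg_eq1P [C0 [HC0 Hx Huniq]] Hall.
suff -> : [fset x] = C0 by [].
apply/fsetP => y; rewrite in_fset1; apply/eqP/idP => [-> //|Hy].
apply/eqP/negP => Hyx; apply: HU.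
have Hvy : lvar y != lvar x.
  apply/eqP => /lit_cases [Hyx'|Hyc]; first by rewrite Hyx' eqxx in Hyx.
  by move: (HF _ HC0 _ Hx); rewrite -Hyc Hy.
set f := set_lit (set_lit xpredT (compl x)) y.
have Hfc : sat_lit f (compl x).
  by rewrite /f sat_set_lit_other ?lvar_compl 1?eq_sym // sat_set_lit.
exists f => C HC; case: (boolP (x \in C)) => HxC.
  by rewrite (Huniq C HC HxC); exists y => //; apply: sat_set_lit.
by move: (Hall C HC); rewrite mem_varC (negbTE HxC) => HcC; exists (compl x).
Qed.

Section UnitClause.

Variables (F : clauseset) (x : lit).
Hypothesis (HMU : minimally_unsat F) (Hx : [fset x] \in F).

Lemma ldeg_unit : ldeg F x = 1.
Proof.
apply: (ldeg_eq1 Hx (fset11 x)) => C HC HxC; apply/eqP/negPn/negP => HCx.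
case: HMU => HU /(_ C HC) [f Hf]; apply: HU; exists f.
have /sat_clause1 Hfx : sat_clause f [fset x].
  by apply: Hf; rewrite in_fsetD1 eq_sym HCx.
by apply: (sat_fsetD1 Hf); exists x.
Qed.

Lemma ldeg_compl_unit_gt0 : 0 < ldeg F (compl x).
Proof.
rewrite lt0n; apply/eqP => /ldeg_eq0 Hnc.
case: HMU => HU /(_ _ Hx) [f Hf]; apply: HU; exists (set_lit f x).
apply: (sat_fsetD1 _ (proj2 (sat_clause1 _ _) (sat_set_lit f x))) => D HD.
have [y Hy Hfy] := Hf D HD; exists y => //.
have HDF : D \in F by move: HD; rewrite in_fsetD1 => /andP [].
case: (eqVneq (lvar y) (lvar x)) => [/lit_cases [->|Hyc]|Hyx].
- exact: sat_set_lit.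
- by move: (Hnc D HDF); rewrite -Hyc Hy.
- by rewrite sat_set_lit_other.
Qed.

End UnitClause.

Lemma saturated_unit_lvar (F : clauseset) (x : lit) :
  saturated F -> [fset x] \in F -> forall C, C \in F -> lvar x \in varC C.
Proof.
move=> [[HU _] Hsat] Hx C HC; apply/negPn/negP => HnC.
have Hv : lvar x \in varF F.
  by apply/bigfcupP; exists [fset x]; rewrite ?Hx // mem_varC fset11.
have HCx : C != [fset x].
  by apply: contraNneq HnC => ->; rewrite mem_varC fset11.
have [f Hf] := Hsat C (compl x) HC Hv HnC; apply: HU; exists f.
have HfD D : D \in F `\ C -> sat_clause f D.
  by move=> HD; apply: Hf; rewrite in_fsetU HD.
apply: (sat_fsetD1 HfD).
have /sat_clause1 Hfx : sat_clause f [fset x].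
  by apply: HfD; rewrite in_fsetD1 eq_sym HCx.
have [y] : sat_clause f (C `|` [fset compl x]).
  by apply: Hf; rewrite in_fsetU fset11 orbT.
rewrite in_fsetU in_fset1 => /orP [Hy Hfy|/eqP ->]; first by exists y.
by rewrite sat_lit_compl Hfx.
Qed.

Theorem lemma14 (F : clauseset) (HF : is_clauseset F) (HMU : minimally_unsat F) :
  (forall v : nat, singular F v ->
     (forall C, C \in F -> v \in varC C) ->
     [fset pos v] \in F \/ [fset neg v] \in F)
  /\
  (forall x : lit, [fset x] \in F ->
     singular F (lvar x) /\ ldeg F x = 1 /\
     (saturated F -> forall C, C \in F -> lvar x \in varC C)).
Proof.
split.
- move=> v /singular_ldeg [[w b] [<- Hx1]] Hall.
  by case: b Hx1 Hall => Hx1 Hall; [left | right]; apply: unit_of_ldeg1 HF (proj1 HMU) Hx1 Hall.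
- move=> x Hx; have Hx1 := ldeg_unit HMU Hx.
  split; first exact: singular_lvar Hx1 (ldeg_compl_unit_gt0 HMU Hx).
  by split=> // Hsat; apply: saturated_unit_lvar.
Qed.
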